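(* Let $(\mu_{+},\sigma_{+})\in\mathbb{K}[[\mathtt{x}]]^{+}\times\mathfrak{M}^{+}$ and define $\phi_{(\mu_{+},\sigma_{+})}:\mathbb{K}[[\mathtt{x}]]\to\mathbb{K}[[\mathtt{x}]]\times\mathfrak{M}$ by $\phi_{(\mu_{+},\sigma_{+})}(f):=\sum_{n\ge0}f_n(\mu_{+},\sigma_{+})^{\rtimes n}$ for $f=\sum_{n\ge0}f_n\mathtt{x}^n$ (the series converges). Then $\phi_{(\mu_{+},\sigma_{+})}$ is $\mathbb{K}$-linear and maps $\mathtt{x}$ to $(\mu_{+},\sigma_{+})$. Moreover, if $f\in\mathfrak{M}$ then $\phi_{(\mu_{+},\sigma_{+})}(f)\in\mathbb{K}[[\mathtt{x}]]^{+}\times\mathfrak{M}^{+}$, and if $\langle f,1\rangle=1$ then $\phi_{(\mu_{+},\sigma_{+})}(f)\in\mathsf{UM}\rtimes\mathsf{US}$.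
   Context: $\mathbb{K}$ is a field of characteristic zero (discrete topology); $\mathbb{K}[[\mathtt{x}]]$ has the $(\mathtt{x})$-adic topology given by the order valuation $\nu$ ($\nu(0)=+\infty$); $\langle f,1\rangle$ is the constant term of $f$. $\mathfrak{M}:=\mathtt{x}\mathbb{K}[[\mathtt{x}]]$; $\mathbb{K}[[\mathtt{x}]]\times\mathfrak{M}$ has the product topology and componentwise vector space structure. $\mathbb{K}[[\mathtt{x}]]^{+}:=\mathfrak{M}$, $\mathfrak{M}^{+}:=\{\sigma\in\mathfrak{M}:\nu(\sigma)>1\}$. For $g=\sum g_n\mathtt{x}^n$ and $\sigma\in\mathfrak{M}$, $g\circ\sigma:=\sum g_n\sigma^n$. Product: $(\mu_1,\sigma_1)\rtimes(\mu_2,\sigma_2):=((\mu_1\circ\sigma_2)\mu_2,\sigma_1\circ\sigma_2)$; $(\mu,\sigma)^{\rtimes0}:=(1,\mathtt{x})$, $(\mu,\sigma)^{\rtimes n}$ the $n$-fold product. $\mathsf{UM}:=\{1+\mu_{+}:\mu_{+}\in\mathbb{K}[[\mathtt{x}]]^{+}\}$, $\mathsf{US}:=\{\mathtt{x}+\sigma_{+}:\sigma_{+}\in\mathfrak{M}^{+}\}$, and $\mathsf{UM}\rtimes\mathsf{US}$ (the Riordan group) is the set of pairs $(\mu,\sigma)$ with $\mu\in\mathsf{UM}$, $\sigma\in\mathsf{US}$. *)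

From mathcomp Require Import all_boot all_order all_algebra.
Set Implicit Arguments. Unset Strict Implicit. Unset Printing Implicit Defensive.
Import GRing.Theory.
Local Open Scope ring_scope.

Section FPS.
Variable K : fieldType.

(* A formal power series f = sum_n f n x^n. *)
Definition fps := nat -> K.

Definition fps0 : fps := fun _ => 0.
Definition fps1 : fps := fun n => if n == 0%N then 1 else 0.
Definition fpsX : fps := fun n => if n == 1%N then 1 else 0.
Definition fps_add (f g : fps) : fps := fun n => f n + g n.
Definition fps_opp (f : fps) : fps := fun n => - f n.
Definition fps_scale (c : K) (f : fps) : fps := fun n => c * f n.
Definition fps_mul (f g : fps) : fps :=
  fun n => \sum_(i < n.+1) f i * g (n - i)%N.
Definition fps_exp (f : fps) (k : nat) : fps := iter k (fps_mul f) fps1.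

Definition const_term (f : fps) : K := f 0%N.

(* ord_ge f n  <->  nu(f) >= n  (nu(0) = +oo, so 0 satisfies it for all n) *)
Definition ord_ge (f : fps) (n : nat) : Prop := forall k, (k < n)%N -> f k = 0.

(* M = x K[[x]] = K[[x]]^+ ;  M^+ = {s in M | nu(s) > 1} *)
Definition inM (f : fps) : Prop := ord_ge f 1.
Definition inMplus (s : fps) : Prop := inM s /\ ord_ge s 2.

(* g o s := sum_n g_n s^n, for s in M. Since nu(s^n) >= n, the coefficient of
   x^k of this (x-adically convergent) series is the finite sum below. *)
Definition fps_comp (g s : fps) : fps :=
  fun k => \sum_(n < k.+1) g n * fps_exp s n k.

Definition fps_cvg (u : nat -> fps) (l : fps) : Prop :=
  forall n, exists N0, forall N, (N0 <= N)%N ->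
    ord_ge (fps_add l (fps_opp (u N))) n.

Definition pair_t := (fps * fps)%type.
Definition pair_add (p q : pair_t) : pair_t := (fps_add p.1 q.1, fps_add p.2 q.2).
Definition pair_scale (c : K) (p : pair_t) : pair_t :=
  (fps_scale c p.1, fps_scale c p.2).
Definition pair_zero : pair_t := (fps0, fps0).
Definition pair_cvg (u : nat -> pair_t) (l : pair_t) : Prop :=
  fps_cvg (fun N => (u N).1) l.1 /\ fps_cvg (fun N => (u N).2) l.2.

Definition rtimes (p q : pair_t) : pair_t :=
  (fps_mul (fps_comp p.1 q.2) q.1, fps_comp p.2 q.2).
Definition rpow (p : pair_t) (n : nat) : pair_t :=
  iter n (fun q => rtimes q p) (fps1, fpsX).

Definition phi_partial (p : pair_t) (f : fps) (N : nat) : pair_t :=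
  \big[pair_add/pair_zero]_(n < N) pair_scale (f n) (rpow p n).

Definition inUM (mu : fps) : Prop := exists mup, inM mup /\ mu = fps_add fps1 mup.
Definition inUS (s : fps) : Prop := exists sp, inMplus sp /\ s = fps_add fpsX sp.
Definition inRiordan (p : pair_t) : Prop := inUM p.1 /\ inUS p.2.

End FPS.

From mathcomp Require Import all_boot all_order all_algebra.
From Stdlib Require Import FunctionalExtensionality.
Set Implicit Arguments. Unset Strict Implicit. Unset Printing Implicit Defensive.
Import GRing.Theory.
Local Open Scope ring_scope.

(* Because nu(mu+) >= 1 and nu(s+) >= 2, the n-th semidirect power of
   (mu+, s+) has order >= n in both components, so the coefficient of x^k of
   sum_n f_n (mu+, s+)^n only involves n <= k: the series converges to an
   explicit limit which is linear in f.  Every remaining claim is read off the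
   coefficients of x^0 and x^1 of that limit, where only the powers 0 and 1
   contribute, namely (1, x) and (mu+, s+). *)

Section Order.
Variable K : fieldType.
Implicit Types (f g s : fps K) (a b n : nat).

Lemma ord_geW f a b : ord_ge f a -> (b <= a)%N -> ord_ge f b.
Proof. by move=> fa ba k kb; apply: fa; apply: leq_trans kb ba. Qed.

Lemma ord_ge_mul f g a b :
  ord_ge f a -> ord_ge g b -> ord_ge (fps_mul f g) (a + b).
Proof.
move=> fa gb k kab; rewrite /fps_mul big1 // => i _.
have [ia|ai] := ltnP i a; first by rewrite fa // mul0r.
rewrite gb ?mulr0 // ltn_subLR; last by rewrite -ltnS.
exact: leq_trans kab (leq_add ai (leqnn b)).
Qed.

Lemma ord_ge_exp s b n : ord_ge s b -> ord_ge (fps_exp s n) (n * b).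
Proof.
move=> sb; elim: n => [|n IHn]; first by [].
by rewrite mulSn /fps_exp iterS; apply: ord_ge_mul.
Qed.

Lemma ord_ge_comp g s a b :
  ord_ge g a -> ord_ge s b -> ord_ge (fps_comp g s) (a * b).
Proof.
move=> ga sb k kab; rewrite /fps_comp big1 // => n _.
have [na|an] := ltnP n a; first by rewrite ga // mul0r.
by rewrite (ord_ge_exp (n := n) sb) ?mulr0 // (leq_trans kab) ?leq_mul.
Qed.

End Order.

Section Series.
Variable K : fieldType.
Implicit Types (u : nat -> fps K) (f : fps K).

(* The x-adic limit of sum_n f_n u_n when nu(u_n) >= n. *)
Definition fps_series u f : fps K := fun k => \sum_(n < k.+1) f n * u n k.

Lemma fps_series_cvg u f (v : nat -> fps K) :
  (forall N k, v N k = \sum_(n < N) f n * u n k) ->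
  (forall n, ord_ge (u n) n) -> fps_cvg v (fps_series u f).
Proof.
move=> vE u_ord n; exists n => N nN k kn; rewrite /fps_add /fps_opp /fps_series vE.
have kN : (k.+1 <= N)%N by apply: leq_trans kn nN.
rewrite -!(big_mkord xpredT (fun i => f i * u i k)) (big_cat_nat _ kN) //=.
rewrite opprD addrA subrr add0r big1_seq ?oppr0 // => i /andP[_].
by rewrite mem_index_iota => /andP[ki _]; rewrite u_ord ?mulr0.
Qed.

Lemma fps_cvg_unique (v : nat -> fps K) l l' : fps_cvg v l -> fps_cvg v l' -> l = l'.
Proof.
move=> vl vl'; apply: functional_extensionality => k.
have [N0 HN0] := vl k.+1; have [N1 HN1] := vl' k.+1.
have := HN0 (maxn N0 N1) (leq_maxl _ _) k (ltnSn k).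
have := HN1 (maxn N0 N1) (leq_maxr _ _) k (ltnSn k).
by rewrite /fps_add /fps_opp => /subr0_eq -> /subr0_eq ->.
Qed.

Lemma pair_cvg_unique (v : nat -> pair_t K) l l' :
  pair_cvg v l -> pair_cvg v l' -> l = l'.
Proof.
case: l l' => [l1 l2] [l1' l2'] [/fps_cvg_unique e1 /fps_cvg_unique e2].
by case=> /e1 /= -> /e2 /= ->.
Qed.

Lemma fps_series_add u f g :
  fps_series u (fps_add f g) = fps_add (fps_series u f) (fps_series u g).
Proof.
apply: functional_extensionality => k.
by rewrite /fps_series /fps_add -big_split; apply: eq_bigr => n _; rewrite mulrDl.
Qed.

Lemma fps_series_scale u c f :
  fps_series u (fps_scale c f) = fps_scale c (fps_series u f).
Proof.
apply: functional_extensionality => k.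
by rewrite /fps_series /fps_scale mulr_sumr; apply: eq_bigr => n _; rewrite mulrA.
Qed.

Lemma fps_series_coef0 u f : fps_series u f 0%N = f 0%N * u 0%N 0%N.
Proof. by rewrite /fps_series big_ord1. Qed.

Lemma fps_series_coef1 u f :
  fps_series u f 1%N = f 0%N * u 0%N 1%N + f 1%N * u 1%N 1%N.
Proof. by rewrite /fps_series big_ord_recr big_ord1. Qed.

Lemma fps_seriesX u : u 1%N 0%N = 0 -> fps_series u (fpsX K) = u 1%N.
Proof.
move=> u10; apply: functional_extensionality => -[|k].
  by rewrite fps_series_coef0 /fpsX mul0r.
rewrite /fps_series big_ord_recl big_ord_recl big1 /fpsX /= ?mul0r ?mul1r ?add0r ?addr0 //.
by move=> i _; rewrite mul0r.
Qed.

End Series.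

Section Riordan.
Variable K : fieldType.
Implicit Types (f m s : fps K) (p : pair_t K).

Lemma inMplus_coef s : s 0%N = 0 -> s 1%N = 0 -> inMplus s.
Proof. by move=> s0 s1; split; [case | case=> [|[|]]]. Qed.

Lemma inUM_coef m : m 0%N = 1 -> inUM m.
Proof.
move=> m0; exists (fun k => m k - fps1 K k); split; first by case=> // _; rewrite m0 subrr.
by apply: functional_extensionality => k; rewrite /fps_add addrC subrK.
Qed.

Lemma inUS_coef s : s 0%N = 0 -> s 1%N = 1 -> inUS s.
Proof.
move=> s0 s1; exists (fun k => s k - fpsX K k); split.
  by apply: inMplus_coef; rewrite /fpsX /= ?s0 ?s1 subrr.
by apply: functional_extensionality => k; rewrite /fps_add addrC subrK.
Qed.

Lemma fps_mul1r f : fps_mul f (fps1 K) = f.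
Proof.
apply: functional_extensionality => k.
rewrite /fps_mul big_ord_recr /= subnn /fps1 /= mulr1 big1 ?add0r // => i _.
by rewrite subn_eq0 leqNgt ltn_ord mulr0.
Qed.

Lemma fps_mul1l f : fps_mul (fps1 K) f = f.
Proof.
apply: functional_extensionality => k.
rewrite /fps_mul big_ord_recl /fps1 /= mul1r subn0 big1 ?addr0 // => i _.
by rewrite mul0r.
Qed.

Lemma fps_comp1 s : fps_comp (fps1 K) s = fps1 K.
Proof.
apply: functional_extensionality => k.
by rewrite /fps_comp big_ord_recl big1 /fps1 /= ?mul1r ?addr0 // => i _; rewrite mul0r.
Qed.

Lemma fps_compX s : inM s -> fps_comp (fpsX K) s = s.
Proof.
move=> sM; apply: functional_extensionality => -[|k].
  by rewrite /fps_comp big_ord1 /fpsX mul0r sM.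
rewrite /fps_comp big_ord_recl big_ord_recl big1 /fpsX /= ?mul0r ?mul1r ?add0r ?addr0.
- by rewrite /fps_exp /= fps_mul1r.
- by move=> i _; rewrite mul0r.
Qed.

Lemma rpowS p n : rpow p n.+1 = rtimes (rpow p n) p.
Proof. by []. Qed.

Lemma rpow1 m s : inM s -> rpow (m, s) 1 = (m, s).
Proof. by move=> sM; rewrite rpowS /rtimes /= fps_comp1 fps_mul1l fps_compX. Qed.

Lemma ord_ge_rpow m s : inM m -> inMplus s -> forall n,
  ord_ge (rpow (m, s) n).1 n /\ ord_ge (rpow (m, s) n).2 n.+1.
Proof.
move=> mM [_ s2]; elim=> [|n [IH1 IH2]].
  by split=> // -[|k].
rewrite rpowS /rtimes /=; split.
  apply: (@ord_geW _ _ (n * 2 + 1)); first by apply/ord_ge_mul/mM/ord_ge_comp.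
  by rewrite muln2 -addnn addn1 ltnS leq_addr.
apply: (@ord_geW _ _ (n.+1 * 2)); first exact: ord_ge_comp.
by rewrite muln2 -addnn addSn !ltnS addnS leq_addr.
Qed.

Definition phi_lim p f : pair_t K :=
  (fps_series (fun n => (rpow p n).1) f, fps_series (fun n => (rpow p n).2) f).

Lemma phi_partial_fst p f N k :
  (phi_partial p f N).1 k = \sum_(n < N) f n * (rpow p n).1 k.
Proof. by rewrite (big_morph (fun q : pair_t K => q.1 k) (id1:=0) (op1:=+%R)). Qed.

Lemma phi_partial_snd p f N k :
  (phi_partial p f N).2 k = \sum_(n < N) f n * (rpow p n).2 k.
Proof. by rewrite (big_morph (fun q : pair_t K => q.2 k) (id1:=0) (op1:=+%R)). Qed.

Lemma phi_partial_cvg m s f : inM m -> inMplus s ->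
  pair_cvg (phi_partial (m, s) f) (phi_lim (m, s) f).
Proof.
move=> mM sMp; have rpow_ord := ord_ge_rpow mM sMp.
split; apply: fps_series_cvg.
- exact: phi_partial_fst.
- by move=> n; case: (rpow_ord n).
- exact: phi_partial_snd.
- by move=> n; case: (rpow_ord n) => _ /ord_geW; apply.
Qed.

Lemma phi_lim_add p f g :
  phi_lim p (fps_add f g) = pair_add (phi_lim p f) (phi_lim p g).
Proof. by rewrite /phi_lim !fps_series_add. Qed.

Lemma phi_lim_scale p c f : phi_lim p (fps_scale c f) = pair_scale c (phi_lim p f).
Proof. by rewrite /phi_lim !fps_series_scale. Qed.

Lemma phi_limX m s : inM m -> inM s -> phi_lim (m, s) (fpsX K) = (m, s).
Proof.
move=> mM sM; rewrite /phi_lim !fps_seriesX.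
all: rewrite rpow1 //; by [apply: mM | apply: sM].
Qed.

Lemma phi_lim_fst0 p f : (phi_lim p f).1 0%N = f 0%N.
Proof. by rewrite /phi_lim /= fps_series_coef0 /fps1 /= mulr1. Qed.

Lemma phi_lim_snd0 p f : (phi_lim p f).2 0%N = 0.
Proof. by rewrite /phi_lim /= fps_series_coef0 /fpsX /= mulr0. Qed.

Lemma phi_lim_snd1 m s f : inMplus s -> (phi_lim (m, s) f).2 1%N = f 0%N.
Proof.
case=> sM s2; rewrite /phi_lim /= fps_series_coef1 rpow1 //= s2 //.
by rewrite /fpsX /= mulr1 mulr0 addr0.
Qed.

End Riordan.

Theorem mainTheorem10 (K : fieldType) (Hchar : [pchar K] =i pred0)
  (mup sp : fps K) (Hmu : inM mup) (Hs : inMplus sp) :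
  (forall f : fps K, exists l, pair_cvg (phi_partial (mup, sp) f) l) /\
  (forall phi : fps K -> pair_t K,
     (forall f, pair_cvg (phi_partial (mup, sp) f) (phi f)) ->
     [/\ (forall f g, phi (fps_add f g) = pair_add (phi f) (phi g)),
         (forall (c : K) f, phi (fps_scale c f) = pair_scale c (phi f)),
         phi (fpsX K) = (mup, sp),
         (forall f, inM f -> inM (phi f).1 /\ inMplus (phi f).2) &
         (forall f, const_term f = 1 -> inRiordan (phi f))]).
Proof.
have lim_cvg f := phi_partial_cvg f Hmu Hs.
split=> [f|phi phi_cvg]; first by exists (phi_lim (mup, sp) f).
have -> : phi = phi_lim (mup, sp).
  apply: functional_extensionality => f.
  exact: pair_cvg_unique (phi_cvg f) (lim_cvg f).
split.
- exact: phi_lim_add.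
- exact: phi_lim_scale.
- by apply: phi_limX; last case: Hs.
- move=> f fM; have f0 : f 0%N = 0 by apply: fM.
  split; first by move=> -[|k] // _; rewrite phi_lim_fst0.
  by apply: inMplus_coef; rewrite ?phi_lim_snd0 ?phi_lim_snd1.
- rewrite /const_term => f f0; split.
    by apply: inUM_coef; rewrite phi_lim_fst0.
  by apply: inUS_coef; rewrite ?phi_lim_snd0 ?phi_lim_snd1.
Qed.
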